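(* Assume (A1). Let $\varepsilon_1\ge 0$, $x\in\mathcal{C}$ and $\beta>\max\{\beta_2(x),\beta_3(x)\}$. If $\|\nabla g(x)\|\le\varepsilon_1$, then $$\|h(x)\|\le\frac{\varepsilon_1}{\beta\,\sigma_{\min}(\mathrm{D}h(x))}\le\varepsilon_1\quad\text{and}\quad \|\mathrm{grad}_{\mathcal{M}_x}f(x)\|\le\Big(1+\frac{C_\lambda(x)}{\beta\,\sigma_{\min}(\mathrm{D}h(x))}\Big)\varepsilon_1\le 2\varepsilon_1,$$ so that $x$ is an $(\varepsilon_1,2\varepsilon_1)$-approximate first-order critical point of the problem $\min f(x)$ subject to $h(x)=0$.
   Context: Let $\mathcal{E}$ be a Euclidean space with inner product $\langle\cdot,\cdot\rangle$ and norm $\|\cdot\|$ (2-norm on $\mathbb{R}^m$), and $f\colon\mathcal{E}\to\mathbb{R}$, $h\colon\mathcal{E}\to\mathbb{R}^m$ be $C^\infty$. $\mathrm{D}h(x)$ is the differential, $\mathrm{D}h(x)^*$ its adjoint, $\sigma_1(\cdot)$ and $\sigma_{\min}(\cdot)=\sigma_m(\cdot)$ the largest and $m$-th singular values. Let $\mathcal{D}=\{x:\operatorname{rank}\mathrm{D}h(x)=m\}$ and for $x\in\mathcal{D}$ let $\lambda(x)=(\mathrm{D}h(x)^* )^\dagger[\nabla f(x)]$ ($\dagger$ = Moore–Penrose pseudo-inverse); $\lambda$ is $C^\infty$ on $\mathcal{D}$. For $\beta\ge0$, Fletcher's augmented Lagrangian is $g(x)=f(x)-\langle h(x),\lambda(x)\rangle+\beta\|h(x)\|^2$.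 For $x\in\mathcal{D}$, $\mathcal{M}_x=\{y:h(y)=h(x)\}$ and $\mathrm{grad}_{\mathcal{M}_x}f(x)=\nabla f(x)-\mathrm{D}h(x)^*[\lambda(x)]$ (the orthogonal projection of $\nabla f(x)$ onto $\ker\mathrm{D}h(x)$). (A1): there are $R,\underline{\sigma}>0$ such that every $x\in\mathcal{C}=\{x:\|h(x)\|\le R\}$ satisfies $\sigma_{\min}(\mathrm{D}h(x))\ge\underline{\sigma}$ (so $\mathcal{C}\subset\mathcal{D}$). For $x\in\mathcal{C}$: $C_\lambda(x)=\|\mathrm{D}\lambda(x)\|_{\mathrm{op}}$, $\beta_2(x)=C_\lambda(x)/\sigma_{\min}(\mathrm{D}h(x))$, $\beta_3(x)=1/\sigma_{\min}(\mathrm{D}h(x))$. A point $x\in\mathcal{D}$ is an $(\varepsilon_0,\varepsilon_1)$-approximate first-order critical point if $\|h(x)\|\le\varepsilon_0$ and $\|\mathrm{grad}_{\mathcal{M}_x}f(x)\|\le\varepsilon_1$. *)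

(* The Euclidean space E is modelled as R^n = 'rV[R]_n (row vectors) with the
   standard inner product; R^m = 'rV[R]_m.  A linear map R^n -> R^m is
   represented by its matrix A : 'M_(n,m) acting by v |-> v *m A; its adjoint
   is then w |-> w *m A^T. *)
From HB Require Import structures.
From mathcomp Require Import all_boot all_order all_algebra.
From mathcomp Require Import all_classical all_reals all_analysis.
Set Implicit Arguments. Unset Strict Implicit. Unset Printing Implicit Defensive.
Import Order.TTheory GRing.Theory Num.Theory.
Import numFieldNormedType.Exports.
Local Open Scope classical_set_scope.
Local Open Scope ring_scope.

Section Defs.
Variable R : realType.

Definition ei (n : nat) (i : 'I_n) : 'rV[R]_n := delta_mx 0 i.

Definition dotp (n : nat) (u v : 'rV[R]_n) : R := \sum_i u 0 i * v 0 i.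
Definition norm2 (n : nat) (v : 'rV[R]_n) : R := Num.sqrt (dotp v v).

Fixpoint iter_partial (n : nat) (W : normedModType R) (s : seq 'I_n)
    (F : 'rV[R]_n -> W) : 'rV[R]_n -> W :=
  match s with
  | [::] => F
  | i :: s' => fun x => 'D_(ei i) (iter_partial s' F) x
  end.

Definition smooth (n : nat) (W : normedModType R) (F : 'rV[R]_n -> W) : Prop :=
  forall s : seq 'I_n,
    (forall (x : 'rV[R]_n) (i : 'I_n), derivable (iter_partial s F) x (ei i)) /\
    continuous (iter_partial s F).

Definition grad (n : nat) (f : 'rV[R]_n -> R) (x : 'rV[R]_n) : 'rV[R]_n :=
  \row_i ('d f x (ei i)).

Definition jac (n m : nat) (F : 'rV[R]_n -> 'rV[R]_m) (x : 'rV[R]_n)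
  : 'M[R]_(n, m) := \matrix_(i, j) ('d F x (ei i)) 0 j.

(* Moore--Penrose pseudo-inverse: the unique X satisfying the four Penrose
   equations (it always exists and is unique) *)
Definition penrose (p q : nat) (A : 'M[R]_(p, q)) (X : 'M[R]_(q, p)) : Prop :=
  [/\ A *m X *m A = A, X *m A *m X = X,
      (A *m X)^T = A *m X & (X *m A)^T = X *m A].
Definition mp_pinv (p q : nat) (A : 'M[R]_(p, q)) : 'M[R]_(q, p) :=
  xget 0 (penrose A).

Definition opnorm (p q : nat) (A : 'M[R]_(p, q)) : R :=
  sup [set norm2 (v *m A) | v in [set v : 'rV[R]_p | norm2 v <= 1]].

(* sigma_min(A) = sigma_m(A) for A : R^n -> R^m, i.e. the square root of the
   m-th largest eigenvalue of A^* A, equivalently the smallest eigenvalue of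
   A A^* : R^m -> R^m (whose matrix, in our convention, is A^T *m A) *)
Definition sigma_min (n m : nat) (A : 'M[R]_(n, m)) : R :=
  Num.sqrt (inf [set a : R | eigenvalue (A^T *m A) a]).

Definition lam (n m : nat) (f : 'rV[R]_n -> R) (h : 'rV[R]_n -> 'rV[R]_m)
  (x : 'rV[R]_n) : 'rV[R]_m := grad f x *m mp_pinv (jac h x)^T.

Definition fletcher (n m : nat) (f : 'rV[R]_n -> R) (h : 'rV[R]_n -> 'rV[R]_m)
  (beta : R) (x : 'rV[R]_n) : R :=
  f x - dotp (h x) (lam f h x) + beta * norm2 (h x) ^+ 2.

Definition gradM (n m : nat) (f : 'rV[R]_n -> R) (h : 'rV[R]_n -> 'rV[R]_m)
  (x : 'rV[R]_n) : 'rV[R]_n := grad f x - lam f h x *m (jac h x)^T.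

Definition C_lam (n m : nat) (f : 'rV[R]_n -> R) (h : 'rV[R]_n -> 'rV[R]_m)
  (x : 'rV[R]_n) : R := opnorm (jac (lam f h) x).
Definition beta2 (n m : nat) (f : 'rV[R]_n -> R) (h : 'rV[R]_n -> 'rV[R]_m)
  (x : 'rV[R]_n) : R := C_lam f h x / sigma_min (jac h x).
Definition beta3 (n m : nat) (h : 'rV[R]_n -> 'rV[R]_m)
  (x : 'rV[R]_n) : R := (sigma_min (jac h x))^-1.

Definition inD (n m : nat) (h : 'rV[R]_n -> 'rV[R]_m) (x : 'rV[R]_n) : Prop :=
  \rank (jac h x) = m.

Definition approx_crit (n m : nat) (f : 'rV[R]_n -> R) (h : 'rV[R]_n -> 'rV[R]_m)
  (eps0 eps1 : R) (x : 'rV[R]_n) : Prop :=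
  [/\ inD h x, norm2 (h x) <= eps0 & norm2 (gradM f h x) <= eps1].

End Defs.

(* Write A for the matrix of Dh(x), J for that of Dλ(x), u = h(x) and
   r = grad_{M_x} f(x).  Differentiating Fletcher's function gives
   ∇g(x) = r + 2β A^* u - J^* u, and r is orthogonal to the range of A^*.
   Pairing ∇g(x) with A^* u gives 2β |A^* u|^2 <= (ε₁ + C_λ |u|) |A^* u|; since
   σ_min |u| <= |A^* u| (a Rayleigh-quotient bound, the minimum of the quadratic
   form on the unit sphere being an eigenvalue) and C_λ < β σ_min, this yields
   β σ_min |u| <= ε₁.  Pairing ∇g(x) with r gives |r| <= ε₁ + C_λ |u|.
   The analytic work is the differentiability of f, h and λ at x: smooth maps
   have continuous partial derivatives, hence are differentiable, and near x the
   pseudo-inverse in λ is given by Cramer's rule for the invertible Gram matrix. *)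

From HB Require Import structures.
From mathcomp Require Import all_boot all_order all_algebra.
From mathcomp Require Import all_classical all_reals all_analysis.
From mathcomp Require Import ring lra.
Import Order.TTheory GRing.Theory Num.Theory.
Import numFieldNormedType.Exports.
Local Open Scope classical_set_scope.
Local Open Scope ring_scope.
Set Implicit Arguments. Unset Strict Implicit. Unset Printing Implicit Defensive.

Section Euclidean.
Variable R : realType.
Implicit Types (n : nat) (a : R).

Lemma dotpE n (u v : 'rV[R]_n) : dotp u v = (u *m v^T) 0 0.
Proof. by rewrite /dotp mxE; apply: eq_bigr => i _; rewrite mxE. Qed.

Lemma dotpC n (u v : 'rV[R]_n) : dotp u v = dotp v u.
Proof. by rewrite /dotp; apply: eq_bigr => i _; rewrite mulrC. Qed.

Lemma dotpDl n (u v w : 'rV[R]_n) : dotp (u + v) w = dotp u w + dotp v w.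
Proof. by rewrite !dotpE mulmxDl mxE. Qed.

Lemma dotpZl n a (u w : 'rV[R]_n) : dotp (a *: u) w = a * dotp u w.
Proof. by rewrite !dotpE -scalemxAl mxE. Qed.

Lemma dotpNl n (u w : 'rV[R]_n) : dotp (- u) w = - dotp u w.
Proof. by rewrite !dotpE mulNmx mxE. Qed.

Lemma dotpBl n (u v w : 'rV[R]_n) : dotp (u - v) w = dotp u w - dotp v w.
Proof. by rewrite dotpDl dotpNl. Qed.

Lemma dotpDr n (u v w : 'rV[R]_n) : dotp w (u + v) = dotp w u + dotp w v.
Proof. by rewrite dotpC dotpDl !(dotpC w). Qed.

Lemma dotpZr n a (u w : 'rV[R]_n) : dotp w (a *: u) = a * dotp w u.
Proof. by rewrite dotpC dotpZl dotpC. Qed.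

Lemma dotpNr n (u w : 'rV[R]_n) : dotp w (- u) = - dotp w u.
Proof. by rewrite dotpC dotpNl dotpC. Qed.

Lemma dotpBr n (u v w : 'rV[R]_n) : dotp w (u - v) = dotp w u - dotp w v.
Proof. by rewrite dotpDr dotpNr. Qed.

Lemma dotp0l n (w : 'rV[R]_n) : dotp 0 w = 0.
Proof. by rewrite dotpE mul0mx mxE. Qed.

Lemma dotp0r n (w : 'rV[R]_n) : dotp w 0 = 0.
Proof. by rewrite dotpC dotp0l. Qed.

Lemma dotp_eil n (i : 'I_n) (w : 'rV[R]_n) : dotp (ei R i) w = w 0 i.
Proof.
rewrite /dotp (bigD1 i) //= big1 => [|j ji]; first by rewrite !mxE !eqxx mul1r addr0.
by rewrite !mxE (negbTE ji) andbF mul0r.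
Qed.

Lemma dotp_mulmx n m (u : 'rV[R]_n) (A : 'M[R]_(n, m)) (w : 'rV[R]_m) :
  dotp (u *m A) w = dotp u (w *m A^T).
Proof. by rewrite !dotpE trmx_mul trmxK mulmxA. Qed.

Lemma dotp_ge0 n (v : 'rV[R]_n) : 0 <= dotp v v.
Proof. by rewrite sumr_ge0 // => i _; rewrite -expr2 sqr_ge0. Qed.

Lemma dotp_eq0 n (v : 'rV[R]_n) : (dotp v v == 0) = (v == 0).
Proof.
apply/idP/eqP => [|->]; last by rewrite dotp0l.
rewrite psumr_eq0 => [/allP v0|i _]; last by rewrite -expr2 sqr_ge0.
apply/rowP => i; rewrite mxE.
by have /implyP := v0 i (mem_index_enum _); rewrite -expr2 sqrf_eq0 => /(_ isT)/eqP.
Qed.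

Lemma norm20 n : norm2 (0 : 'rV[R]_n) = 0.
Proof. by rewrite /norm2 dotp0l sqrtr0. Qed.

Lemma norm2_ge0 n (v : 'rV[R]_n) : 0 <= norm2 v.
Proof. exact: sqrtr_ge0. Qed.

Lemma norm2_sqr n (v : 'rV[R]_n) : norm2 v ^+ 2 = dotp v v.
Proof. by rewrite sqr_sqrtr // dotp_ge0. Qed.

Lemma norm2_eq0 n (v : 'rV[R]_n) : (norm2 v == 0) = (v == 0).
Proof. by rewrite sqrtr_eq0 le_eqVlt ltNge dotp_ge0 orbF dotp_eq0. Qed.

Lemma norm2_gt0 n (v : 'rV[R]_n) : (0 < norm2 v) = (v != 0).
Proof. by rewrite lt_def norm2_eq0 norm2_ge0 andbT. Qed.

Lemma norm2Z n a (v : 'rV[R]_n) : norm2 (a *: v) = `|a| * norm2 v.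
Proof.
rewrite /norm2 dotpZl dotpZr mulrA -expr2 sqrtrM ?sqr_ge0 //.
by rewrite sqrtr_sqr.
Qed.

Lemma norm2N n (v : 'rV[R]_n) : norm2 (- v) = norm2 v.
Proof. by rewrite /norm2 dotpNl dotpNr opprK. Qed.

Lemma dotp_le_norm2 n (u v : 'rV[R]_n) : dotp u v <= norm2 u * norm2 v.
Proof.
have [->|u0] := eqVneq u 0; first by rewrite dotp0l mulr_ge0 ?norm2_ge0.
have [->|v0] := eqVneq v 0; first by rewrite dotp0r mulr_ge0 ?norm2_ge0.
set a := norm2 u; set b := norm2 v.
have a0 : 0 < a by rewrite norm2_gt0.
have b0 : 0 < b by rewrite norm2_gt0.
(* expand [0 <= |b u - a v|^2] *)
have := dotp_ge0 (b *: u - a *: v).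
rewrite !(dotpBl, dotpBr, dotpZl, dotpZr) -!norm2_sqr -/a -/b (dotpC v u) => H.
have : 0 <= 2 * a * b * (a * b - dotp u v) by nra.
by rewrite pmulr_rge0 ?subr_ge0 // !mulr_gt0.
Qed.

Lemma normr_dotp_le_norm2 n (u v : 'rV[R]_n) : `|dotp u v| <= norm2 u * norm2 v.
Proof.
by rewrite ler_norml dotp_le_norm2 andbT lerNl -dotpNl -(norm2N u) dotp_le_norm2.
Qed.

End Euclidean.

Section MatrixCalculus.
Variable R : realType.
Variable V : normedModType R.
Variable x : V.

Lemma differentiable_sumr (W : normedModType R) (I : Type) (r : seq I) (P : pred I)
    (G : I -> V -> W) :
  (forall i, differentiable (G i) x) ->
  differentiable (fun y => \sum_(i <- r | P i) G i y) x.
Proof.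
by move=> dG; rewrite -fct_sumE; elim/big_ind: _ => // *; apply: differentiableD.
Qed.

Lemma differentiable_prodr (I : Type) (r : seq I) (P : pred I) (G : I -> V -> R) :
  (forall i, differentiable (G i) x) ->
  differentiable (fun y => \prod_(i <- r | P i) G i y) x.
Proof.
by move=> dG; rewrite -fct_prodE; elim/big_ind: _ => // *; apply: differentiableM.
Qed.

Lemma differentiable_entry p q (M : V -> 'M[R]_(p, q)) i j :
  differentiable M x -> differentiable (fun y => M y i j) x.
Proof. by move=> dM; exact: differentiable_comp dM (differentiable_coord _ i j). Qed.

Lemma differentiable_entriesP p q (M : V -> 'M[R]_(p, q)) :
  differentiable M x <-> forall i j, differentiable (fun y => M y i j) x.
Proof.
split=> [dM i j|dMij]; first exact: differentiable_entry.
have -> : M = fun y => \sum_i \sum_j M y i j *: delta_mx i j.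
  by apply: funext => y; rewrite -matrix_sum_delta.
apply: differentiable_sumr => i; apply: differentiable_sumr => j.
exact: differentiableZl.
Qed.

Lemma differentiable_trmx p q (M : V -> 'M[R]_(p, q)) :
  differentiable M x -> differentiable (fun y => (M y)^T) x.
Proof.
move=> dM; apply/differentiable_entriesP => i j.
under eq_fun do rewrite mxE; exact: differentiable_entry.
Qed.

Lemma differentiable_scalemx p q (c : V -> R) (M : V -> 'M[R]_(p, q)) :
  differentiable c x -> differentiable M x -> differentiable (fun y => c y *: M y) x.
Proof.
move=> dc dM; apply/differentiable_entriesP => i j.
under eq_fun do rewrite mxE; apply: differentiableM => //; exact: differentiable_entry.
Qed.

Lemma differentiable_mulmx p q r (M : V -> 'M[R]_(p, q)) (N : V -> 'M[R]_(q, r)) :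
  differentiable M x -> differentiable N x -> differentiable (fun y => M y *m N y) x.
Proof.
move=> dM dN; apply/differentiable_entriesP => i j.
under eq_fun do rewrite mxE; apply: differentiable_sumr => k.
by apply: differentiableM; exact: differentiable_entry.
Qed.

Lemma differentiable_det p (M : V -> 'M[R]_p) :
  differentiable M x -> differentiable (fun y => \det (M y)) x.
Proof.
move=> dM; apply: differentiable_sumr => s; apply: differentiableM.
  exact: differentiable_cst.
by apply: differentiable_prodr => i; exact: differentiable_entry.
Qed.

Lemma differentiable_adj p (M : V -> 'M[R]_p) :
  differentiable M x -> differentiable (fun y => \adj (M y)) x.
Proof.
move=> dM; apply/differentiable_entriesP => i j.
under eq_fun do rewrite mxE /cofactor.
apply: differentiableM; first exact: differentiable_cst.
apply: differentiable_det; apply/differentiable_entriesP => k l.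
under eq_fun do rewrite !mxE; exact: differentiable_entry.
Qed.

Lemma differentiable_dotp m (u w : V -> 'rV[R]_m) :
  differentiable u x -> differentiable w x -> differentiable (fun y => dotp (u y) (w y)) x.
Proof.
move=> du dw; apply: differentiable_sumr => i.
by apply: differentiableM; exact: differentiable_entry.
Qed.

Lemma is_derive_entry p q (M : V -> 'M[R]_(p, q)) v dM i j :
  is_derive x v M dM -> is_derive x v (fun y => M y i j) (dM i j).
Proof.
by move=> [dMx <-]; split; [exact: (derivable_mxP M x v).1 | rewrite derive_mx // mxE].
Qed.

Lemma is_derive_dotp m (u w : V -> 'rV[R]_m) v du dw :
  is_derive x v u du -> is_derive x v w dw ->
  is_derive x v (fun y => dotp (u y) (w y)) (dotp du (w x) + dotp (u x) dw).
Proof.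
move=> Du Dw; rewrite /dotp -big_split -fct_sumE /=.
apply: is_derive_eq.
  by apply: is_derive_sum => i; apply: is_deriveM; exact: is_derive_entry.
by apply: eq_bigr => i _; rewrite /GRing.scale /= addrC mulrC [w x 0 i * _]mulrC.
Qed.

End MatrixCalculus.

Section LocalDifferentiability.
Variable R : realType.
Variables (V W : normedModType R) (x : V).

Lemma linear_approx_differentiable (f : V -> W) (L : {linear V -> W}) :
  continuous L -> f \o shift x = cst (f x) + L +o_ 0 id -> differentiable f x.
Proof. by move=> cL fL; apply/diff_locallyP; rewrite (diff_unique cL fL). Qed.

Lemma near_eq_differentiable (f g : V -> W) :
  {near x, f =1 g} -> differentiable f x -> differentiable g x.
Proof.
move=> fg df; have gx : f x = g x := nbhs_singleton fg.
have dg : g \o shift x = cst (g x) + 'd f x +o_ 0 id.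
  apply/eqaddoP => e e0; have /eqaddoP /(_ e e0) := diff_locally df.
  move: fg; rewrite (near_shift 0 x) => fg.
  apply: filterS2 fg => h /=; rewrite subr0 => fgh.
  by rewrite -gx -[X in _ -> `|X| <= _]/(g (h + x) - (f x + 'd f x h)) -fgh.
exact: linear_approx_differentiable (diff_continuous df) dg.
Qed.

End LocalDifferentiability.

Section MeanValue.
Variable R : realType.
Variable V : normedModType R.

Lemma is_derive_line (F : V -> R) y v t :
  derivable F (y + t *: v) v ->
  is_derive t 1 (fun s => F (y + s *: v)) ('D_v F (y + t *: v)).
Proof.
have quotE :
    (fun s : R => s^-1 *: (((fun s => F (y + s *: v)) \o shift t) (s *: 1) - F (y + t *: v))) =
    (fun s : R => s^-1 *: ((F \o shift (y + t *: v)) (s *: v) - F (y + t *: v))).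
  by apply: funext => s /=; rewrite scaler1 scalerDl addrCA addrA.
by move=> dF; split; [rewrite /derivable quotE | rewrite /derive quotE].
Qed.

Lemma MVT_between0 (phi dphi : R -> R) (a : R) :
  (forall s : R, is_derive s (1 : R) phi (dphi s)) ->
  exists2 c, `|c| <= `|a| & phi a - phi 0 = dphi c * a.
Proof.
move=> Dphi; have cphi : continuous phi.
  by move=> s; apply/differentiable_continuous/derivable1_diffP; have [] := Dphi s.
have [a0|a0] := leP 0 a.
  have [c + E] := MVT_segment a0 (fun s _ => Dphi s) (continuous_subspaceT cphi).
  rewrite in_itv /= => /andP[c0 ca].
  by exists c; rewrite ?E ?subr0 // !ger0_norm.
have [c + E] := MVT_segment (ltW a0) (fun s _ => Dphi s) (continuous_subspaceT cphi).
rewrite in_itv /= => /andP[ac c0].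
exists c; first by rewrite !ler0_norm ?lerN2 // ltW.
by apply: oppr_inj; rewrite opprB E sub0r mulrN.
Qed.

Lemma norm_line_increment_le (F : V -> R) y v t d e :
  (forall s, derivable F (y + s *: v) v) ->
  (forall s, `|s| <= `|t| -> `|'D_v F (y + s *: v) - d| <= e) ->
  `|F (y + t *: v) - F y - t * d| <= e * `|t|.
Proof.
move=> dF dFe; have [c ct E] := MVT_between0 t (fun s => is_derive_line (dF s)).
move: E; rewrite scale0r addr0 => ->.
by rewrite [t * d]mulrC -mulrBl normrM ler_wpM2r // dFe.
Qed.

End MeanValue.

Section PartialDerivatives.
Variables (R : realType) (n : nat).
Implicit Types (F : 'rV[R]_n -> R) (x h : 'rV[R]_n).

Definition dotr (c : 'rV[R]_n) v : R := dotp v c.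

Fact dotr_is_linear c : linear (dotr c).
Proof. by move=> a u v; rewrite /dotr dotpDl dotpZl. Qed.

HB.instance Definition _ c := GRing.isLinear.Build R 'rV[R]_n R _ (dotr c) (dotr_is_linear c).

Lemma continuous_dotr c : continuous (dotr c).
Proof. by move=> v; apply/differentiable_continuous/differentiable_dotp. Qed.

Lemma normr_entry_le h i : `|h 0 i| <= `|h|.
Proof. by rewrite [leRHS]/Num.Def.normr /= mx_normrE; exact: le_bigmax _ _ (0, i). Qed.

Lemma normr_le_entries h r : 0 <= r -> (forall i, `|h 0 i| <= r) -> `|h| <= r.
Proof.
move=> r0 hr; rewrite [leLHS]/Num.Def.normr /= mx_normrE.
by apply: bigmax_le => // -[i j] _; rewrite (ord1 i) hr.
Qed.

(* Going from [x] to [x + h] through the points [x + coord_prefix h k] changes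
   one coordinate at a time. *)
Definition coord_prefix h (k : nat) : 'rV[R]_n :=
  \row_i (if (i < k)%N then h 0 i else 0).

Lemma coord_prefix0 h : coord_prefix h 0 = 0.
Proof. by apply/rowP => i; rewrite !mxE. Qed.

Lemma coord_prefix_full h : coord_prefix h n = h.
Proof. by apply/rowP => i; rewrite !mxE ltn_ord. Qed.

Lemma coord_prefixS h (k : 'I_n) :
  coord_prefix h k.+1 = coord_prefix h k + h 0 k *: ei R k.
Proof.
apply/rowP => i; rewrite !mxE.
have [->|ik] := eqVneq i k; first by rewrite ltnSn ltnn !eqxx mulr1 add0r.
by rewrite ltnS leq_eqVlt val_eqE (negbTE ik) andbF mulr0 addr0.
Qed.

Lemma normr_coord_prefix_le h (k : 'I_n) t :
  `|t| <= `|h 0 k| -> `|coord_prefix h k + t *: ei R k| <= `|h|.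
Proof.
move=> tk; apply: normr_le_entries => // i; rewrite !mxE.
have [->|ik] := eqVneq i k.
  by rewrite ltnn eqxx mulr1 add0r (le_trans tk) ?normr_entry_le.
rewrite andbF mulr0 addr0; case: ifP => _; first exact: normr_entry_le.
by rewrite normr0.
Qed.

Lemma increment_telescope F x h :
  F (x + h) - F x = \sum_(k < n) (F (x + coord_prefix h k.+1) - F (x + coord_prefix h k)).
Proof.
rewrite -(big_mkord xpredT (fun k => F (x + coord_prefix h k.+1) - F (x + coord_prefix h k))).
by rewrite telescope_sumr // coord_prefix_full coord_prefix0 addr0.
Qed.

Lemma C1_differentiable F x :
  (forall y i, derivable F y (ei R i)) ->
  (forall i, {for x, continuous ('D_(ei R i) F)}) ->
  differentiable F x.
Proof.
move=> dF cF; set c := \row_i 'D_(ei R i) F x.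
apply: (linear_approx_differentiable (@continuous_dotr c)).
apply/eqaddoP => _/posnumP[eps].
set e := eps%:num / n.+1%:R.
have e0 : 0 < e by rewrite divr_gt0.
have : \forall y \near x, forall i, `|'D_(ei R i) F y - c 0 i| <= e.
  apply: (@filter_forall _ _ (fun i y => `|'D_(ei R i) F y - c 0 i| <= e) _ (nbhs_filter x)).
  move=> i.
  have /cvgrPdist_le /(_ e e0) := cF i.
  by apply: filterS => y; rewrite mxE distrC.
move=> /nbhs_ballP[d d0 partials_near].
apply/nbhs_ballP; exists d => // h; rewrite -ball_normE /= sub0r normrN => hd.
have step (k : 'I_n) :
    `|F (x + coord_prefix h k.+1) - F (x + coord_prefix h k) - h 0 k * c 0 k| <= e * `|h|.
  rewrite coord_prefixS addrA.
  apply: le_trans (norm_line_increment_le _ _) _ => [s|s sk|].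
  - exact: dF.
  - apply: partials_near; rewrite -ball_normE /= -addrA opprD addrA subrr sub0r normrN.
    exact: le_lt_trans (normr_coord_prefix_le sk) hd.
  - by rewrite ler_wpM2l ?normr_entry_le ?ltW.
rewrite -[X in `|X|]/(F (h + x) - (F x + dotr c h)) (addrC h) opprD addrA.
rewrite increment_telescope /dotr /dotp -sumrB.
apply: le_trans (ler_norm_sum _ _ _) _.
apply: le_trans (ler_sum _ (fun k _ => step k)) _.
rewrite sumr_const card_ord -mulr_natr mulrAC ler_wpM2r // /e mulrAC.
by rewrite ler_pdivrMr // ler_wpM2l // ler_nat.
Qed.

End PartialDerivatives.

Section Smooth.
Variables (R : realType) (n : nat).

Lemma iter_partial_rcons (W : normedModType R) (F : 'rV[R]_n -> W) s k :
  iter_partial (rcons s k) F = iter_partial s ('D_(ei R k) F).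
Proof. by elim: s => //= i s ->. Qed.

Lemma smooth_derive (W : normedModType R) (F : 'rV[R]_n -> W) k :
  smooth F -> smooth ('D_(ei R k) F).
Proof. by move=> sF s; rewrite -iter_partial_rcons. Qed.

Lemma iter_partial_entry p q (M : 'rV[R]_n -> 'M[R]_(p, q)) s i j : smooth M ->
  iter_partial s (fun y => M y i j) = fun y => iter_partial s M y i j.
Proof.
move=> sM; elim: s => //= k s ->; apply: funext => y.
by rewrite derive_mx ?mxE //; exact: (sM s).1.
Qed.

Lemma smooth_entry p q (M : 'rV[R]_n -> 'M[R]_(p, q)) i j :
  smooth M -> smooth (fun y => M y i j).
Proof.
move=> sM s; rewrite iter_partial_entry //; split=> [y k|y].
  exact: (derivable_mxP _ _ _).1 ((sM s).1 y k) i j.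
exact: continuous_comp ((sM s).2 y) (@coord_continuous _ _ _ i j _).
Qed.

Lemma smooth_differentiable (F : 'rV[R]_n -> R) y : smooth F -> differentiable F y.
Proof.
by move=> sF; apply: C1_differentiable => [z i|i]; [exact: (sF [::]).1 | exact: (sF [:: i]).2].
Qed.

Lemma smooth_differentiable_mx p q (M : 'rV[R]_n -> 'M[R]_(p, q)) y :
  smooth M -> differentiable M y.
Proof.
by move=> sM; apply/differentiable_entriesP => i j; apply/smooth_differentiable/smooth_entry.
Qed.

Lemma gradE (f : 'rV[R]_n -> R) y :
  differentiable f y -> grad f y = \row_i 'D_(ei R i) f y.
Proof. by move=> df; apply/rowP => i; rewrite !mxE deriveE. Qed.

Lemma jac_row m (F : 'rV[R]_n -> 'rV[R]_m) y i :
  differentiable F y -> row i (jac F y) = 'D_(ei R i) F y.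
Proof. by move=> dF; apply/rowP => j; rewrite !mxE deriveE. Qed.

Lemma jacE m (F : 'rV[R]_n -> 'rV[R]_m) y i j :
  differentiable F y -> jac F y i j = 'D_(ei R i) (fun z => F z 0 j) y.
Proof.
move=> dF; have /(congr1 (fun v : 'rV_m => v 0 j)) := jac_row i dF.
by rewrite mxE => ->; rewrite derive_mx ?mxE //; exact: diff_derivable.
Qed.

End Smooth.

Section OperatorNorm.
Variable R : realType.
Variables p q : nat.
Implicit Type A : 'M[R]_(p, q).

Lemma opnorm_has_sup A :
  has_sup [set norm2 (v *m A) | v in [set v : 'rV[R]_p | norm2 v <= 1]].
Proof.
split; first by exists (norm2 (0 *m A)), 0; rewrite //= norm20.
pose colA j : 'rV[R]_p := (col j A)^T.
exists (Num.sqrt (\sum_j norm2 (colA j) ^+ 2)) => _ [v v1 <-].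
rewrite ler_sqrt ?sumr_ge0 // => [|j _]; last exact: sqr_ge0.
apply: ler_sum => j _; rewrite -expr2.
have -> : (v *m A) 0 j = dotp v (colA j).
  by rewrite mxE /dotp; apply: eq_bigr => i _; rewrite !mxE.
rewrite -real_normK ?num_real // ler_pXn2r ?nnegrE ?normr_ge0 ?norm2_ge0 //.
apply: le_trans (normr_dotp_le_norm2 _ _) _.
by rewrite ler_piMl ?norm2_ge0.
Qed.

Lemma opnorm_ge0 A : 0 <= opnorm A.
Proof.
have -> : 0 = norm2 (0 *m A) by rewrite mul0mx norm20.
by apply: (ub_le_sup (opnorm_has_sup A).2); exists 0; rewrite //= norm20.
Qed.

Lemma norm2_mulmx_le A (v : 'rV[R]_p) : norm2 (v *m A) <= opnorm A * norm2 v.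
Proof.
have [->|v0] := eqVneq v 0; first by rewrite mul0mx !norm20 mulr0.
have nv : 0 < norm2 v by rewrite norm2_gt0.
have unit_v : norm2 ((norm2 v)^-1 *: v) <= 1.
  by rewrite norm2Z ger0_norm ?invr_ge0 ?norm2_ge0 // mulVf ?gt_eqF.
have : norm2 ((norm2 v)^-1 *: v *m A) <= opnorm A.
  by apply: (ub_le_sup (opnorm_has_sup A).2); exists ((norm2 v)^-1 *: v).
by rewrite -scalemxAl norm2Z ger0_norm ?invr_ge0 ?norm2_ge0 // ler_pdivrMl // mulrC.
Qed.

Lemma norm2_mul_trmx_le A (w : 'rV[R]_q) : norm2 (w *m A^T) <= opnorm A * norm2 w.
Proof.
set u := w *m A^T.
have [->|u0] := eqVneq u 0; first by rewrite norm20 mulr_ge0 ?opnorm_ge0 ?norm2_ge0.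
have nu : 0 < norm2 u by rewrite norm2_gt0.
rewrite -(ler_pM2l nu) -expr2 norm2_sqr {1}/u -dotp_mulmx.
apply: le_trans (dotp_le_norm2 _ _) _.
by rewrite mulrA ler_wpM2r ?norm2_ge0 // mulrC norm2_mulmx_le.
Qed.

End OperatorNorm.

Section Rayleigh.
Variable R : realType.

Lemma quad_ge0_lin_coef0 (a b : R) : (forall t, 0 <= a * t + b * t ^+ 2) -> a = 0.
Proof.
move=> ge0; apply/eqP; apply: contraT => a0.
have c0 : 0 < 1 + `|b| by rewrite ltr_pwDl.
have a20 : 0 < a ^+ 2 by rewrite exprn_even_gt0.
have := ge0 (- a / (1 + `|b|)).
have -> : a * (- a / (1 + `|b|)) + b * (- a / (1 + `|b|)) ^+ 2 =
  a ^+ 2 / (1 + `|b|) ^+ 2 * (b - (1 + `|b|)) by field; rewrite gt_eqF.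
rewrite pmulr_rge0; last by rewrite divr_gt0 // exprn_gt0.
by have := ler_norm b; lra.
Qed.

Variable n : nat.
Implicit Types (M N : 'M[R]_n) (u v : 'rV[R]_n).

Lemma psd_null_mulmx N v : N^T = N -> (forall u, 0 <= dotp u (u *m N)) ->
  dotp v (v *m N) = 0 -> v *m N = 0.
Proof.
move=> NT N_ge0 v0.
suff : 2 * dotp (v *m N) (v *m N) = 0.
  by move/eqP; rewrite mulf_eq0 pnatr_eq0 /= dotp_eq0 => /eqP.
have sym u w : dotp u (w *m N) = dotp w (u *m N) by rewrite dotpC dotp_mulmx NT.
(* the form at [v + t (v N)] is a nonnegative quadratic in [t] without constant term *)
apply: (@quad_ge0_lin_coef0 _ (dotp (v *m N) ((v *m N) *m N))) => t.
suff -> : 2 * dotp (v *m N) (v *m N) * t + dotp (v *m N) (v *m N *m N) * t ^+ 2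
    = dotp (v + t *: (v *m N)) ((v + t *: (v *m N)) *m N) by exact: N_ge0.
rewrite mulmxDl -scalemxAl !(dotpDl, dotpDr, dotpZl, dotpZr) v0 (sym v (v *m N)) add0r.
by ring.
Qed.

Definition sphere := [set v : 'rV[R]_n | dotp v v = 1].

Lemma sphere_compact : compact sphere.
Proof.
apply: bounded_closed_compact.
  exists 1; split => // r /ltW r1 v /= v1.
  rewrite [leLHS]/Num.Def.normr /= mx_normrE; apply: bigmax_le => [|[i j] _ /=].
    exact: le_trans r1.
  apply: le_trans r1; rewrite (ord1 i) -(@ler_pXn2r _ 2) ?nnegrE // real_normK ?num_real //.
  rewrite expr1n -v1 /dotp (bigD1 j) //= -expr2 lerDl sumr_ge0 // => k _.
  by rewrite -expr2 sqr_ge0.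
have -> : sphere = (fun v => dotp v v) @^-1` [set 1] by [].
apply: (proj1 (continuous_closedP _)); last exact: closed_eq.
by move=> v; apply/differentiable_continuous/differentiable_dotp.
Qed.

Lemma exists_rayleigh_min M : (0 < n)%N ->
  exists2 c, dotp c c = 1 & forall u, dotp c (c *m M) * dotp u u <= dotp u (u *m M).
Proof.
move=> n0; have sphere0 : sphere !=set0.
  by exists (ei R (Ordinal n0)); rewrite /sphere /= dotp_eil !mxE !eqxx.
have qc : continuous (fun v => dotp v (v *m M)).
  move=> v; apply/differentiable_continuous/differentiable_dotp => //.
  exact: differentiable_mulmx.
have [c] := EVT_min_rV sphere0 sphere_compact (continuous_subspaceT qc).
rewrite inE => c1 cmin; exists c => // u.
have [->|u0] := eqVneq u 0; first by rewrite dotp0l mulr0 mul0mx dotp0l.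
have uu0 : 0 < dotp u u by rewrite -norm2_sqr exprn_gt0 // norm2_gt0.
set w := (norm2 u)^-1 *: u.
have w1 : dotp w w = 1.
  by rewrite dotpZl dotpZr mulrA -expr2 exprVn norm2_sqr mulVf ?gt_eqF.
have := cmin w; rewrite inE => /(_ w1).
rewrite -scalemxAl dotpZl dotpZr mulrA -expr2 exprVn norm2_sqr.
by rewrite ler_pdivlMl // mulrC.
Qed.

Lemma eigenvalue_rayleigh_min M c : M^T = M -> dotp c c = 1 ->
  (forall u, dotp c (c *m M) * dotp u u <= dotp u (u *m M)) ->
  eigenvalue M (dotp c (c *m M)).
Proof.
move=> MT c1 cmin; set mu := dotp c (c *m M).
set N := M - mu%:M.
have quadN u : dotp u (u *m N) = dotp u (u *m M) - mu * dotp u u.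
  by rewrite /N mulmxBr mul_mx_scalar dotpBr dotpZr.
have : c *m N = 0.
  apply: psd_null_mulmx; first by rewrite linearB /= tr_scalar_mx MT.
    by move=> u; rewrite quadN subr_ge0.
  by rewrite quadN c1 mulr1 subrr.
rewrite /N mulmxBr mul_mx_scalar => /eqP; rewrite subr_eq0 => /eqP cM.
apply/eigenvalueP; exists c => //; apply: contra_eqN c1 => /eqP ->.
by rewrite dotp0l eq_sym oner_neq0.
Qed.

Lemma inf_eigenvalue_le_rayleigh M v :
  M^T = M -> has_lbound [set a | eigenvalue M a] ->
  inf [set a | eigenvalue M a] * dotp v v <= dotp v (v *m M).
Proof.
move=> MT lb; have [->|v0] := eqVneq v 0; first by rewrite dotp0l mulr0 mul0mx dotp0l.
have n0 : (0 < n)%N.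
  rewrite lt0n; apply: contra v0 => /eqP n0; rewrite -dotp_eq0 /dotp big1 // => i.
  by suff : (i < 0)%N by []; rewrite -n0.
have [c c1 cmin] := exists_rayleigh_min M n0.
apply: le_trans (cmin v); rewrite ler_wpM2r ?dotp_ge0 //.
exact: (ge_inf lb) (eigenvalue_rayleigh_min MT c1 cmin).
Qed.

End Rayleigh.

Section SigmaMin.
Variable R : realType.
Variables n m : nat.
Implicit Type A : 'M[R]_(n, m).

Let eigs A := [set a : R | eigenvalue (A^T *m A) a].

Let sigma_min_gt0_inf A : 0 < sigma_min A -> 0 < inf (eigs A) /\ has_lbound (eigs A).
Proof.
rewrite sqrtr_gt0 => inf0; split => //.
have : has_inf (eigs A) by apply: contrapT => /inf_out eigs0; rewrite eigs0 ltxx in inf0.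
by case.
Qed.

Lemma sigma_min_gt0_unitmx A : 0 < sigma_min A -> A^T *m A \in unitmx.
Proof.
move=> /sigma_min_gt0_inf[inf0 lb]; rewrite -row_free_unit -kermx_eq0.
apply: contraT => ker0; have eig0 : eigenvalue (A^T *m A) 0.
  by rewrite /eigenvalue /eigenspace raddf0 subr0.
by have := ge_inf lb eig0; rewrite leNgt inf0.
Qed.

Lemma sigma_min_mul_norm2_le A (v : 'rV[R]_m) :
  sigma_min A * norm2 v <= norm2 (v *m A^T).
Proof.
have [s0|/sigma_min_gt0_inf[inf0 lb]] := leP (sigma_min A) 0.
  by apply: le_trans (norm2_ge0 _); rewrite mulr_le0_ge0 ?norm2_ge0.
rewrite -(@ler_pXn2r _ 2) ?nnegrE ?mulr_ge0 ?norm2_ge0 ?sqrtr_ge0 //.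
rewrite exprMn !norm2_sqr sqr_sqrtr ?(ltW inf0) // dotp_mulmx trmxK -mulmxA.
by apply: inf_eigenvalue_le_rayleigh => //; rewrite trmx_mul trmxK.
Qed.

End SigmaMin.

Section FullColumnRank.
Variable R : realType.
Variables n m : nat.
Variable A : 'M[R]_(n, m).
Hypothesis gram_unit : A^T *m A \in unitmx.

Lemma gram_unitmx_rank : \rank A = m.
Proof.
by apply/eqP; rewrite eqn_leq rank_leq_col -{1}(mxrank_unit gram_unit) mxrankM_maxr.
Qed.

Lemma penrose_trmx : penrose A^T (A *m invmx (A^T *m A)).
Proof.
split.
- by rewrite mulmxA mulmxV // mul1mx.
- by rewrite -!mulmxA (mulmxA A^T) (mulmxA (invmx _)) mulVmx // mul1mx.
- by rewrite mulmxA mulmxV // trmx1.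
- by rewrite !trmx_mul trmx_inv trmx_mul trmxK mulmxA.
Qed.

Lemma penrose_trmx_uniq X : penrose A^T X -> X = A *m invmx (A^T *m A).
Proof.
move=> [AXA XAX _ XA_sym]; set M := A^T *m A.
have XAT : X *m A^T = A *m X^T by rewrite -XA_sym trmx_mul trmxK.
have XE : X = A *m (X^T *m X) by rewrite mulmxA -XAT XAX.
have MY : M *m ((X^T *m X) *m A^T) = A^T.
  by rewrite /M mulmxA -(mulmxA A^T A) -XE AXA.
have YAT : X^T *m X *m A^T = invmx M *m A^T by rewrite -[in RHS]MY mulKmx.
suff YE : X^T *m X = invmx M by rewrite XE YE.
rewrite -[X^T *m X]mulmx1 -(mulmxV gram_unit) -/M mulmxA.
by rewrite /M mulmxA YAT -mulmxA -/M -mulmxA (mulmxA A^T) -/M mulKmx.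
Qed.

Lemma mp_pinv_trmxE : mp_pinv A^T = A *m invmx (A^T *m A).
Proof.
apply: penrose_trmx_uniq; apply: xgetPex.
by exists (A *m invmx (A^T *m A)); exact: penrose_trmx.
Qed.

End FullColumnRank.

Section FletcherGradient.
Variables (R : realType) (n m : nat).
Variables (f : 'rV[R]_n -> R) (h : 'rV[R]_n -> 'rV[R]_m).
Hypotheses (sf : smooth f) (sh : smooth h).
Variable x : 'rV[R]_n.
Hypothesis gram_unit : (jac h x)^T *m jac h x \in unitmx.

Lemma gradM_mulmx_jac : gradM f h x *m jac h x = 0.
Proof.
by rewrite /gradM /lam mp_pinv_trmxE // mulmxBl -!mulmxA mulVmx // mulmx1 subrr.
Qed.

Lemma lam_differentiable : differentiable (lam f h) x.
Proof.
have dgrad : differentiable (grad f) x.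
  have -> : grad f = fun y => \row_i 'D_(ei R i) f y.
    by apply: funext => y; rewrite gradE //; exact: smooth_differentiable.
  apply/differentiable_entriesP => i j; under eq_fun do rewrite mxE.
  exact/smooth_differentiable/smooth_derive.
have djac : differentiable (jac h) x.
  have -> : jac h = fun y => \matrix_(i, j) 'D_(ei R i) (fun z => h z 0 j) y.
    apply: funext => y; apply/matrixP => i j.
    by rewrite [RHS]mxE jacE //; exact: smooth_differentiable_mx.
  apply/differentiable_entriesP => i j; under eq_fun do rewrite mxE.
  exact/smooth_differentiable/smooth_derive/smooth_entry.
pose M y := (jac h y)^T *m jac h y.
have dM : differentiable M x := differentiable_mulmx (differentiable_trmx djac) djac.
have ddet : differentiable (fun y => \det (M y)) x := differentiable_det dM.
have det0 : \det (M x) != 0 by rewrite -unitfE -unitmxE.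
(* Near [x] the Gram matrix stays invertible, so [lam] is given by Cramer's rule. *)
apply: (@near_eq_differentiable _ _ _ _
  (fun y => grad f y *m (jac h y *m ((\det (M y))^-1 *: \adj (M y))))).
  have : \forall y \near x, \det (M y) != 0.
    exact: cvgr_neq0 (differentiable_continuous ddet) det0.
  apply: filterS => y dety; rewrite /lam mp_pinv_trmxE ?unitmxE ?unitfE //.
  by rewrite /invmx unitmxE unitfE dety.
apply: differentiable_mulmx dgrad (differentiable_mulmx djac _).
exact: differentiable_scalemx (differentiableV ddet det0) (differentiable_adj dM).
Qed.

Lemma grad_fletcher beta :
  grad (fletcher f h beta) x =
  gradM f h x + (2 * beta) *: (h x *m (jac h x)^T) - h x *m (jac (lam f h) x)^T.
Proof.
have df : differentiable f x := smooth_differentiable x sf.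
have dh : differentiable h x := smooth_differentiable_mx x sh.
have dL := lam_differentiable.
have gE : fletcher f h beta =
    f - (fun y => dotp (h y) (lam f h y)) + cst beta * (fun y => dotp (h y) (h y)).
  by apply: funext => y; rewrite /fletcher norm2_sqr.
have dg : differentiable (fletcher f h beta) x.
  rewrite gE; apply: differentiableD.
    by apply: differentiableB => //; exact: differentiable_dotp.
  by apply: differentiableM => //; exact: differentiable_dotp.
rewrite gradE //; apply/rowP => i; rewrite mxE.
have Di (W : normedModType R) (F : 'rV[R]_n -> W) :
    differentiable F x -> is_derive x (ei R i) F ('D_(ei R i) F x).
  by move=> dF; apply/derivableP/diff_derivable.
have rowD p (F : 'rV[R]_n -> 'rV[R]_p) :
    differentiable F x -> 'D_(ei R i) F x = ei R i *m jac F x.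
  by move=> dF; rewrite -jac_row // rowE.
have Dg := is_deriveD (is_deriveB (Di _ _ df) (is_derive_dotp (Di _ _ dh) (Di _ _ dL)))
  (is_deriveM (is_derive_cst beta x (ei R i)) (is_derive_dotp (Di _ _ dh) (Di _ _ dh))).
have Dfi : 'D_(ei R i) f x = grad f x 0 i by rewrite (gradE df) mxE.
rewrite gE; case: Dg => _ ->; rewrite Dfi (rowD _ h) // (rowD _ (lam f h)) // /gradM.
move: (grad f x) (lam f h x) (h x) (jac h x) (jac (lam f h) x) => g L u A J.
rewrite (dotpC u (_ *m J)) (dotpC u (_ *m A)) !dotp_mulmx !dotp_eil !mxE.
rewrite /GRing.scale /=; ring.
Qed.

End FletcherGradient.

Section StationarityBounds.
Variables (R : realType) (n m : nat).
Variables (A J : 'M[R]_(n, m)) (gm d : 'rV[R]_n) (u : 'rV[R]_m) (beta eps : R).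
Hypothesis orth : gm *m A = 0.
Hypothesis dE : d = gm + (2 * beta) *: (u *m A^T) - u *m J^T.
Hypothesis d_le : norm2 d <= eps.

Let orthA w : dotp gm (w *m A^T) = 0.
Proof. by rewrite -dotp_mulmx orth dotp0l. Qed.

Let eps_ge0 : 0 <= eps.
Proof. exact: le_trans (norm2_ge0 d) d_le. Qed.

Lemma norm2_tangent_le : norm2 gm <= eps + opnorm J * norm2 u.
Proof.
have [->|gm0] := eqVneq gm 0.
  by rewrite norm20 addr_ge0 ?eps_ge0 ?mulr_ge0 ?opnorm_ge0 ?norm2_ge0.
have gm_gt0 : 0 < norm2 gm by rewrite norm2_gt0.
rewrite -(ler_pM2l gm_gt0) -expr2 norm2_sqr.
have -> : dotp gm gm = dotp gm d + dotp gm (u *m J^T).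
  by rewrite dE dotpBr dotpDr dotpZr orthA mulr0 addr0 subrK.
rewrite mulrDr lerD //; apply: le_trans (dotp_le_norm2 _ _) _.
  by rewrite ler_wpM2l ?norm2_ge0.
by rewrite ler_wpM2l ?norm2_ge0 ?norm2_mul_trmx_le.
Qed.

Lemma norm2_constraint_le : 0 < sigma_min A -> opnorm J < beta * sigma_min A ->
  norm2 u <= eps / (beta * sigma_min A).
Proof.
move=> sg0 CJ; set sg := sigma_min A in sg0 CJ *; set C := opnorm J in CJ *.
set a := norm2 u; set s := norm2 (u *m A^T).
have C0 : 0 <= C := opnorm_ge0 J.
have a0 : 0 <= a := norm2_ge0 u.
have bsg0 : 0 < beta * sg := le_lt_trans C0 CJ.
have b0 : 0 < beta by rewrite -(pmulr_lgt0 _ sg0).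
have sa : sg * a <= s := sigma_min_mul_norm2_le A u.
(* pair [d] with [u A^T] *)
have quad : 2 * beta * s ^+ 2 <= (eps + C * a) * s.
  have -> : 2 * beta * s ^+ 2 = dotp d (u *m A^T) + dotp (u *m J^T) (u *m A^T).
    by rewrite dE dotpBl dotpDl orthA add0r dotpZl norm2_sqr subrK.
  rewrite mulrDl lerD //; apply: le_trans (dotp_le_norm2 _ _) _.
    by rewrite ler_wpM2r ?norm2_ge0.
  by rewrite ler_wpM2r ?norm2_ge0 ?norm2_mul_trmx_le.
rewrite ler_pdivlMr //.
have [s0|s0] := eqVneq s 0.
  have : sg * a <= 0 by rewrite -s0.
  rewrite pmulr_rle0 // => a_le0.
  by rewrite (le_trans (mulr_le0_ge0 a_le0 (ltW bsg0))) ?eps_ge0.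
have sp : 0 < s by rewrite lt_def s0 norm2_ge0.
have lin : 2 * beta * s <= eps + C * a.
  by rewrite -(ler_pM2r sp); move: quad; rewrite expr2 mulrA.
nra.
Qed.

End StationarityBounds.

Unset Implicit Arguments.

Theorem mainTheorem2 (R : realType) (n m : nat)
  (f : 'rV[R]_n -> R) (h : 'rV[R]_n -> 'rV[R]_m)
  (Rad sig : R) (eps1 beta : R) (x : 'rV[R]_n) :
  smooth f -> smooth h ->
  (* (A1) *)
  0 < Rad -> 0 < sig ->
  (forall y : 'rV[R]_n, norm2 (h y) <= Rad -> sig <= sigma_min (jac h y)) ->
  0 <= eps1 ->
  norm2 (h x) <= Rad ->
  Num.max (beta2 f h x) (beta3 h x) < beta ->
  norm2 (grad (fletcher f h beta) x) <= eps1 ->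
  [/\ norm2 (h x) <= eps1 / (beta * sigma_min (jac h x)),
      eps1 / (beta * sigma_min (jac h x)) <= eps1,
      norm2 (gradM f h x) <= (1 + C_lam f h x / (beta * sigma_min (jac h x))) * eps1,
      (1 + C_lam f h x / (beta * sigma_min (jac h x))) * eps1 <= 2 * eps1
    & approx_crit f h eps1 (2 * eps1) x].
Proof.
move=> sf sh _ sig0 A1 eps0 hxR hbeta hgrad.
have sg0 : 0 < sigma_min (jac h x) := lt_le_trans sig0 (A1 x hxR).
have gram := sigma_min_gt0_unitmx sg0.
have orth := gradM_mulmx_jac f gram.
have gE := grad_fletcher sf sh gram beta.
move: hbeta; rewrite gt_max /beta2 /beta3 /C_lam => /andP[hC hsg].
have CJ : opnorm (jac (lam f h) x) < beta * sigma_min (jac h x) by rewrite -ltr_pdivrMr.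
have hu := norm2_constraint_le orth gE hgrad sg0 CJ.
have hr := norm2_tangent_le orth gE hgrad.
move: CJ hsg hu hr; set b := beta * _; set C := opnorm _ => CJ hsg hu hr.
have b1 : 1 < b by rewrite -ltr_pdivrMr // div1r.
have b0 : 0 < b := lt_trans ltr01 b1.
have C0 : 0 <= C := opnorm_ge0 _.
have Cb1 : C / b <= 1 by rewrite ler_pdivrMr // mul1r ltW.
have eps_b : eps1 / b <= eps1 by rewrite ler_pdivrMr // ler_peMr // ltW.
have hr' : norm2 (gradM f h x) <= (1 + C / b) * eps1.
  by apply: le_trans hr _; rewrite mulrDl mul1r lerD2l mulrAC -mulrA ler_wpM2l.
have coef2 : (1 + C / b) * eps1 <= 2 * eps1 by nra.
split=> //; split; [exact: gram_unitmx_rank | exact: le_trans hu eps_b | exact: le_trans hr' coef2].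
Qed.
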